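(* Let $X_1,X_2,\dots$ be nonnegative random variables (task durations), $S_1,S_2,\dots$ i.i.d. exponential random variables with parameter $\lambda>0$, and $a_1,a_2,\dots\in\{0,1\}$ arbitrary decisions. Let $T>0$, $\theta=\min\{n\in\mathbb N:\sum_{i=1}^n(S_i+X_ia_i)>T\}$ and $S=2\lambda T+1$. Then $$\mathbb E\big[(\theta-S)_+\big]\le4.$$
   Context: $(z)_+=\max\{z,0\}$. *)

From HB Require Import structures.
From mathcomp Require Import all_boot all_order all_algebra.
From mathcomp Require Import all_classical all_reals all_analysis.
Set Implicit Arguments. Unset Strict Implicit. Unset Printing Implicit Defensive.
Import Order.TTheory GRing.Theory Num.Theory.
Local Open Scope classical_set_scope.
Local Open Scope ring_scope.

Definition mutually_independent d (T : measurableType d) (R : realType)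
    (P : probability T R) (S : nat -> {RV P >-> R}) : Prop :=
  forall (I : seq nat) (B : nat -> set R), uniq I ->
    (forall i, i \in I -> measurable (B i)) ->
    P (\bigcap_(i in [set` I]) (S i @^-1` B i)) =
    (\prod_(i <- I) P (S i @^-1` B i))%E.

Definition iid_exponential d (T : measurableType d) (R : realType)
    (P : probability T R) (lambda : R) (S : nat -> {RV P >-> R}) : Prop :=
  mutually_independent S /\
  forall i (A : set R), measurable A ->
    distribution P (S i) A = exponential_prob lambda A.

(* theta(w) = min { n : sum_{i<n} (S_i + X_i a_i)(w) > T } as an extended
   real; it is +oo if the set is empty (the minimum of the empty set).
   Index shift: (S i, X i, a i) for i < n are the paper's S_1..S_n etc.
   n = 0 never qualifies since T > 0, so this is the paper's min over n >= 1. *)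
Definition theta d (T : measurableType d) (R : realType)
    (S X a : nat -> T -> R) (Tm : R) (w : T) : \bar R :=
  ereal_inf [set (n%:R)%:E | n in
    [set n : nat | Tm < \sum_(i < n) (S i w + X i w * a i w)]].

From HB Require Import structures.
From mathcomp Require Import all_boot all_order all_algebra.
From mathcomp Require Import all_classical all_reals all_analysis.
From mathcomp Require Import measurable_realfun ring lra.
Import Order.TTheory GRing.Theory Num.Theory.
Local Open Scope classical_set_scope.
Local Open Scope ring_scope.
Set Implicit Arguments.
Unset Strict Implicit.
Unset Printing Implicit Defensive.

(* If theta > n, then S_1 + ... + S_n <= T, since the task durations X_i a_i
   are nonnegative.  Hence (theta - S)_+ <= #{k | theta > n0 + k} for
   n0 = floor S, and E[(theta - S)_+] <= sum_k P(S_1 + ... + S_(n0+k) <= T).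
   This tail is bounded by a Chernoff argument with parameter lambda/2, in the
   discrete form that independence of events allows: rounding each S_i down to
   a grid of width h covers the event by the admissible grid configurations,
   each of probability a product of bin masses, and weighting a configuration
   by exp(lambda/2 (T - its grid value)) >= 1 yields
   P(S_1 + ... + S_n <= T) <= e^(lambda T/2) (3/4)^n.  As n0 > 2 lambda T and
   3/4 <= e^(-1/4), the k-th term is at most (3/4)^k, and these sum to 4. *)

Section measure_facts.
Local Open Scope ereal_scope.
Context d (T : measurableType d) (R : realType).
Variable mu : {measure set T -> \bar R}.

Lemma ge0_le_integral_nonmeasurable (f g : T -> \bar R) :
  (forall x, 0 <= f x) -> (forall x, f x <= g x) ->
  \int[mu]_x f x <= \int[mu]_x g x.
Proof.
move=> f0 fg; have g0 x : 0 <= g x := le_trans (f0 x) (fg x).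
rewrite !ge0_integralE // !patch_setT.
apply: le_ereal_sup => _ [h hf <-]; exists h => //= x.
exact: le_trans (hf x) (fg x).
Qed.

Lemma le_measure_bigsetU (I : Type) (s : seq I) (P : pred I) (A : I -> set T) :
  (forall i, P i -> measurable (A i)) ->
  mu (\big[setU/set0]_(i <- s | P i) A i) <= \sum_(i <- s | P i) mu (A i).
Proof.
move=> mA; elim: s => [|i s IHs]; first by rewrite !big_nil measure0.
rewrite !big_cons; case: ifP => // Pi.
apply: le_trans (measureU2 _ (mA i Pi) _) (leeD _ IHs) => //.
exact: bigsetU_measurable.
Qed.

End measure_facts.

Lemma mutually_independent_ord d (T : measurableType d) (R : realType)
    (P : probability T R) (S : nat -> {RV P >-> R}) n (B : 'I_n -> set R) :
  mutually_independent S -> (forall i, measurable (B i)) ->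
  P [set w | forall i : 'I_n, B i (S i w)] =
  (\prod_(i < n) P (S i @^-1` B i))%E.
Proof.
move=> indepS mB.
pose B' k := if insub k is Some i then B i else setT.
have B'E (i : 'I_n) : B' i = B i by rewrite /B' valK.
have := indepS (index_iota 0 n) B' (iota_uniq _ _).
rewrite big_mkord; under eq_bigr do rewrite B'E.
move=> <-; last by move=> k _; rewrite /B'; case: insub.
congr (P _); apply/seteqP; split => w /=.
  move=> Bw k; rewrite /= mem_index_iota => /andP[_ kn].
  by have := Bw (Ordinal kn); rewrite -B'E.
move=> Bw i; rewrite -B'E; apply: Bw.
by rewrite /= mem_index_iota ltn_ord.
Qed.

Section exponential_intervals.
Context d (T : measurableType d) (R : realType) (P : probability T R).
Variables (lambda : R) (Y : {RV P >-> R}).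
Hypothesis Y_exponential : forall A, measurable A ->
  distribution P Y A = exponential_prob lambda A.

Lemma exponential_lt0 : P (Y @^-1` `]-oo, 0[) = 0%E.
Proof.
rewrite -[LHS]/(distribution P Y _) Y_exponential // /exponential_prob.
by apply: integral0_eq => x /=; rewrite in_itv /= => /lt0_exponential_pdf ->.
Qed.

Lemma exponential_itv0o x : 0 <= x ->
  P (Y @^-1` `[0, x[) = (1 - expR (- lambda * x))%:E.
Proof.
rewrite le_eqVlt => /predU1P[<-|x_gt0].
  by rewrite set_itv_ge ?bnd_simp // preimage_set0 measure0 mulr0 expR0 subrr.
rewrite -[LHS]/(distribution P Y _) Y_exponential // /exponential_prob.
rewrite integral_itv_bndo_bndc; last first.
  apply/measurable_EFinP/measurable_funTS; exact: measurable_exponential_pdf.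
by rewrite -/(exponential_prob lambda _) exponential_prob_itv0c // EFinB.
Qed.

Lemma exponential_itvco x y : 0 <= x <= y ->
  P (Y @^-1` `[x, y[) = (expR (- lambda * x) - expR (- lambda * y))%:E.
Proof.
move=> /andP[x_ge0 xy].
have split0y : `[0, y[%classic = `[0, x[ `|` `[x, y[ :> set R.
  by apply: itv_bndbnd_setU; rewrite bnd_simp.
have disj : `[0, x[%classic `&` `[x, y[ = set0 :> set R.
  apply/seteqP; split => // z /=.
  rewrite !in_itv /= => -[/andP[_ zx] /andP[xz _]].
  by move: (lt_le_trans zx xz); rewrite ltxx.
set A := Y @^-1` `[0, x[; set B := Y @^-1` `[x, y[.
have PU : P (Y @^-1` `[0, y[) = (P A + P B)%E.
  rewrite split0y preimage_setU measureU //; try exact: measurable_funPTI.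
  by rewrite -preimage_setI disj preimage_set0.
move: PU; rewrite /A !exponential_itv0o ?(le_trans x_ge0) //.
have /fineK <- : P B \is a fin_num.
  by apply: fin_num_measure; exact: measurable_funPTI.
move=> /eqP; rewrite -EFinD eqe => /eqP eq_sum.
by congr EFin; lra.
Qed.
End exponential_intervals.

Lemma chernoff_sum_prod (R : realType) (n K : nat) (v p : nat -> R) (t a : R) :
  0 <= t -> (forall j, 0 <= p j) ->
  \sum_(phi : {ffun 'I_n -> 'I_K} | \sum_(i < n) v (phi i) <= a)
      \prod_(i < n) p (phi i)
  <= expR (t * a) * (\sum_(j < K) expR (- (t * v j)) * p j) ^+ n.
Proof.
move=> t_ge0 p_ge0.
have weight_ge0 j : 0 <= expR (- (t * v j)) * p j by rewrite mulr_ge0 ?expR_ge0.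
rewrite -[n in _ ^+ n]card_ord -prodr_const bigA_distr_bigA mulr_sumr /=.
rewrite [leRHS](bigID (fun phi : {ffun 'I_n -> 'I_K} =>
  \sum_(i < n) v (phi i) <= a)) /=.
rewrite -[leLHS]addr0 lerD //; last first.
  by apply: sumr_ge0 => phi _; rewrite mulr_ge0 ?expR_ge0 ?prodr_ge0.
apply: ler_sum => phi good_phi.
rewrite big_split /= -expR_sum mulrA -expRD -[leLHS]mul1r.
apply: ler_wpM2r; first exact: prodr_ge0.
apply: le_trans (expR_ge1Dx _); rewrite lerDl sumrN -mulr_sumr -mulrN -mulrDr.
by rewrite mulr_ge0 // subr_ge0.
Qed.

Definition bin (R : realType) (h : R) (j : nat) : set R :=
  `[j%:R * h, j.+1%:R * h[.

Lemma floor_bin_cover (R : realType) (n K : nat) (h a : R) (x : 'I_n -> R) :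
  0 < h -> a < K%:R * h -> (forall i, 0 <= x i) -> \sum_(i < n) x i <= a ->
  exists2 phi : {ffun 'I_n -> 'I_K},
    \sum_(i < n) (phi i)%:R * h <= a & forall i, bin h (phi i) (x i).
Proof.
move=> h_gt0 aK x_ge0 sum_le.
have xh_ge0 i : 0 <= x i / h by rewrite divr_ge0 // ltW.
have floor_lt i : (Num.truncn (x i / h) < K)%N.
  rewrite truncn_lt_nat // ltr_pdivrMr //; apply: le_lt_trans aK.
  apply: le_trans sum_le; rewrite (bigD1 i) //= lerDl.
  by apply: sumr_ge0 => j _.
exists [ffun i => Ordinal (floor_lt i)] => [|i].
  apply: le_trans sum_le; apply: ler_sum => i _.
  by rewrite ffunE /= -ler_pdivlMr // truncn_le.
have /andP[lb ub] := truncn_itv (xh_ge0 i).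
by rewrite /bin ffunE /= in_itv /= -ler_pdivlMr // -ltr_pdivrMr // lb ub.
Qed.

Lemma measurable_sum_le d (T : measurableType d) (R : realType)
    (f : nat -> T -> R) (n : nat) (a : R) :
  (forall i, measurable_fun setT (f i)) ->
  measurable [set w | \sum_(i < n) f i w <= a].
Proof.
move=> mf; have msum : measurable_fun setT (fun w => \sum_(i < n) f i w).
  by apply: measurable_sum => i; exact: mf.
rewrite -[X in measurable X]setTI.
have -> : [set w | \sum_(i < n) f i w <= a] =
    (fun w => \sum_(i < n) f i w) @^-1` `]-oo, a].
  by apply/seteqP; split => w /=; rewrite in_itv.
exact: msum.
Qed.

Lemma prob_sum_le_bins d (T : measurableType d) (R : realType)
    (P : probability T R) (S : nat -> {RV P >-> R}) (n K : nat) (h a : R) :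
  mutually_independent S -> (forall i, P (S i @^-1` `]-oo, 0[) = 0%E) ->
  0 < h -> a < K%:R * h ->
  (P [set w | (\sum_(i < n) S i w <= a)%R] <=
   \sum_(phi : {ffun 'I_n -> 'I_K} | (\sum_(i < n) (phi i)%:R * h <= a)%R)
     \prod_(i < n) P (S i @^-1` bin h (phi i)))%E.
Proof.
move=> indepS S_ge0 h_gt0 aK.
pose good (phi : {ffun 'I_n -> 'I_K}) := \sum_(i < n) (phi i)%:R * h <= a.
pose binned (phi : {ffun 'I_n -> 'I_K}) :=
  [set w | forall i : 'I_n, bin h (phi i) (S i w)].
have mbin phi : measurable (binned phi).
  suff -> : binned phi = \bigcap_(i in [set: 'I_n]) (S i @^-1` bin h (phi i)).
    apply: fin_bigcap_measurable => [|i _]; first exact: finite_finset.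
    by apply: measurable_funPTI; exact: measurable_itv.
  by apply/seteqP; split => w /= Hw i => [_|]; [exact: Hw | exact: Hw].
have cover : [set w | \sum_(i < n) S i w <= a] `<=`
    \big[setU/set0]_(i < n) (S i @^-1` `]-oo, 0[) `|`
    \big[setU/set0]_(phi | good phi) binned phi.
  move=> w /= sum_le.
  have [neg|nonneg] := pselect (exists i : 'I_n, S i w < 0).
    left; case: neg => i Si_lt0.
    by rewrite -bigcup_seq; exists i => //=; rewrite mem_index_enum.
  right.
  have [i|phi good_phi phiP] := floor_bin_cover h_gt0 aK _ sum_le.
    by rewrite leNgt; apply/negP => Si_lt0; apply: nonneg; exists i.
  by rewrite -bigcup_seq_cond; exists phi => //=; rewrite mem_index_enum.
apply: le_trans (le_measure _ _ _ cover) _; rewrite ?inE.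
- apply: (measurable_sum_le (f := fun i => S i)) => i.
  exact: measurable_funP.
- apply: measurableU; last exact: bigsetU_measurable.
  by apply: bigsetU_measurable => i _; exact: measurable_funPTI.
apply: le_trans (measureU2 _ _ _) _.
- by apply: bigsetU_measurable => i _; exact: measurable_funPTI.
- exact: bigsetU_measurable.
rewrite -[leRHS]add0e; apply: leeD.
  apply: le_trans (le_measure_bigsetU P _ _) _.
    by move=> i _; exact: measurable_funPTI.
  by rewrite big1 // => i _; exact: S_ge0.
apply: le_trans (le_measure_bigsetU P _ _) _ => //.
apply: lee_sum => phi _; rewrite -mutually_independent_ord // => i.
exact: measurable_itv.
Qed.

Section exponential_sum_tail.
Context d (T : measurableType d) (R : realType) (P : probability T R).
Variables (lambda : R) (S : nat -> {RV P >-> R}).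
Hypotheses (lambda_gt0 : 0 < lambda) (S_iid : iid_exponential lambda S).

(* The bin width h makes exp(-lambda h / 2) = 4/5, so bin j has mass
   (16/25)^j (9/25) and the Chernoff sum with t = lambda/2 is at most
   (9/25) / (1 - 64/125) = 45/61 <= 3/4. *)
Let h : R := - (2 * ln (4/5)) / lambda.

Let h_gt0 : 0 < h.
Proof. by rewrite divr_gt0 // oppr_gt0 pmulr_rlt0 // ln_lt0 //; lra. Qed.

Let expR_half_bin j : expR (- (lambda / 2 * (j%:R * h))) = (4/5) ^+ j.
Proof.
have -> : - (lambda / 2 * (j%:R * h)) = j%:R * ln (4/5).
  by rewrite /h; field; rewrite lt0r_neq0.
by rewrite expRM_natl lnK // posrE; lra.
Qed.

Let prob_bin i j : P (S i @^-1` bin h j) = ((16/25) ^+ j * (9/25))%:E.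
Proof.
have expR_bin k : expR (- lambda * (k%:R * h)) = (16/25) ^+ k.
  have -> : - lambda * (k%:R * h) = 2%:R * (- (lambda / 2 * (k%:R * h))).
    by field.
  by rewrite expRM_natl expR_half_bin -exprM mulnC exprM; congr (_ ^+ _); lra.
have [_ S_exp] := S_iid.
rewrite (exponential_itvco (S_exp i)) ?expR_bin //.
  by rewrite exprS; congr EFin; lra.
by rewrite ler_pM2r // ler_nat leqnSn andbT mulr_ge0 // ltW.
Qed.

Lemma exponential_sum_le_tail n a :
  (P [set w | (\sum_(i < n) S i w <= a)%R] <=
   (expR (lambda * a / 2) * (3/4) ^+ n)%:E)%E.
Proof.
have [indepS S_exp] := S_iid.
pose K := (Num.truncn (a / h)).+1.
have aK : a < K%:R * h by rewrite -ltr_pdivrMr // truncnS_gt.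
apply: le_trans (prob_sum_le_bins n indepS _ h_gt0 aK) _.
  by move=> i; apply: exponential_lt0; exact: S_exp.
under eq_bigr do under eq_bigr do rewrite prob_bin.
under eq_bigr do rewrite prodEFin.
rewrite sumEFin lee_fin.
pose p j : R := (16/25) ^+ j * (9/25).
apply: le_trans (chernoff_sum_prod _ _ (fun j => j%:R * h) _
  (p := p) (t := lambda / 2) _ _) _.
- by rewrite divr_ge0 // ltW.
- by move=> j; rewrite mulr_ge0 // exprn_ge0.
rewrite mulrAC; apply: ler_wpM2l; first exact: expR_ge0.
apply: lerXn2r; rewrite ?nnegrE.
- by apply: sumr_ge0 => j _; rewrite !mulr_ge0 ?expR_ge0 ?exprn_ge0.
- lra.
have -> : \sum_(j < K) expR (- (lambda / 2 * (j%:R * h))) * p j =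
    series (geometric (9/25) (64/125)) K.
  rewrite /series /= -(big_mkord xpredT
    (fun j => expR (- (lambda / 2 * (j%:R * h))) * p j)).
  apply: eq_bigr => j _; rewrite expR_half_bin /p /geometric /=.
  have -> : 64/125 = 4/5 * (16/25) :> R by lra.
  rewrite [in RHS]exprMn; move: ((4/5 : R) ^+ j) ((16/25 : R) ^+ j) => x y.
  by rewrite (mulrA x y) mulrC.
apply: le_trans (geometric_le_lim _ _ _ _) _; [lra | lra | | ].
  by rewrite ger0_norm; lra.
by rewrite ler_pdivrMr; lra.
Qed.

End exponential_sum_tail.

Lemma nneseries_geometric (R : realType) (x : R) : 0 <= x < 1 ->
  (\sum_(k <oo) (x ^+ k)%:E = ((1 - x)^-1)%:E)%E.
Proof.
move=> /andP[x_ge0 x_lt1]; apply/cvg_lim => //.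
rewrite -[X in X%:E]mul1r; apply: cvg_EFin.
  by apply: nearW => n; rewrite sumEFin.
have := @cvg_geometric_series R 1 x; rewrite ger0_norm // => /(_ x_lt1).
apply: cvg_trans; apply: near_eq_cvg; apply: nearW => n /=.
rewrite sumEFin /= /series /=.
by apply: eq_bigr => k _; rewrite /geometric /= mul1r.
Qed.

Lemma expR_half_pow_truncn_le1 (R : realType) (y : R) : 0 <= y ->
  expR (y / 2) * (3/4) ^+ Num.truncn (2 * y + 1) <= 1.
Proof.
move=> y_ge0; set n := Num.truncn _.
have y_lt_n : 2 * y < n%:R.
  have /andP[_] :=
    truncn_itv (ltW (ltr_pwDr ltr01 (mulr_ge0 (ler0n R 2) y_ge0))).
  by rewrite -/n -natr1; lra.
have quarter_le : 3/4 <= expR (- (1/4)) :> R.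
  by apply: le_trans (expR_ge1Dx _); lra.
apply: le_trans (ler_wpM2l (expR_ge0 _) (lerXn2r n _ _ quarter_le)) _.
- by rewrite nnegrE; lra.
- by rewrite nnegrE expR_ge0.
by rewrite -expRM_natl -expRD expR_le1; lra.
Qed.

Lemma ereal_inf_nat_sub_le_count (R : realType) (A : pred nat) (n0 : nat)
    (s : R) :
  n0%:R <= s ->
  (maxe (ereal_inf [set n%:R%:E | n in [set n | A n]] - s%:E) 0 <=
   \sum_(k <oo) ((~~ A (n0 + k))%:R : R)%:E)%E.
Proof.
move=> n0_le_s.
have count_ge K : (forall k, (k < K)%N -> ~~ A (n0 + k)) ->
    (K%:R%:E <= \sum_(k <oo) ((~~ A (n0 + k))%:R : R)%:E)%E.
  move=> notA; apply: le_trans (nneseries_lim_ge K _) => [|k _ _]; last first.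
    by rewrite lee_fin.
  rewrite big_mkord (eq_bigr (fun=> 1%E)) => [|k _]; last by rewrite notA.
  by rewrite sumEFin sumr_const card_ord.
have [[m Am]|noA] := pselect (exists m, A m).
  case: (ex_minnP (ex_intro A m Am)) => {m Am} m Am m_min.
  have -> : ereal_inf [set (n%:R : R)%:E | n in [set n | A n]] = (m%:R : R)%:E.
    apply/eqP; rewrite eq_le ereal_inf_lbound ?andbT; last by exists m.
    by apply: le_ereal_inf_tmp => _ [k Ak <-]; rewrite lee_fin ler_nat m_min.
  apply: le_trans (count_ge (m - n0)%N _) => [|k]; last first.
    by rewrite ltn_subRL => k_lt; apply/negP => /m_min; rewrite leqNgt k_lt.
  rewrite ge_max -EFinB -[0%E]/(0%:E) !lee_fin ler0n andbT.
  have [n0_le_m|m_lt_n0] := leqP n0 m; first by rewrite natrB //; lra.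
  rewrite (eqP (ltnW m_lt_n0 : (m - n0 == 0)%N)) subr_le0.
  by apply: le_trans n0_le_s; rewrite ler_nat ltnW.
have -> : [set (n%:R : R)%:E | n in [set n | A n]] = set0.
  by apply/seteqP; split => // x [n An _]; apply: noA; exists n.
suff -> : (\sum_(k <oo) ((~~ A (n0 + k))%:R : R)%:E)%E = +oo%E by rewrite leey.
apply/eqyP => M _; apply: le_trans (count_ge (Num.truncn M).+1 _).
  by rewrite lee_fin ltW // truncnS_gt.
by move=> k _; apply/negP => Ak; apply: noA; exists (n0 + k)%N.
Qed.

Lemma theta_sub_le_count d (T : measurableType d) (R : realType)
    (S X a : nat -> T -> R) (Tm s : R) (n0 : nat) (w : T) :
  (forall i, 0 <= X i w) -> (forall i, a i w = 0 \/ a i w = 1) -> n0%:R <= s ->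
  (maxe (theta S X a Tm w - s%:E) 0 <=
   \sum_(k <oo) (\1_[set v | (\sum_(i < n0 + k) S i v <= Tm)%R] w)%:E)%E.
Proof.
move=> X_ge0 a01 n0_le_s; apply: le_trans (ereal_inf_nat_sub_le_count
  (fun n => Tm < \sum_(i < n) (S i w + X i w * a i w)) n0_le_s) _.
apply: lee_nneseries => k _ //; rewrite lee_fin indicE -leNgt.
have [sum_le|_] := boolP (\sum_(i < n0 + k) (S i w + X i w * a i w) <= Tm).
  rewrite mem_set //=; apply: le_trans sum_le; apply: ler_sum => i _.
  by rewrite lerDl mulr_ge0 //; case: (a01 i) => ->.
by rewrite ler_nat.
Qed.

Theorem lemmaF4 (d : measure_display) (Omega : measurableType d) (R : realType)
    (P : probability Omega R) (lambda Tm : R)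
    (X : nat -> {RV P >-> R}) (S : nat -> {RV P >-> R})
    (a : nat -> {RV P >-> R}) :
  0 < lambda -> 0 < Tm ->
  (forall i w, 0 <= X i w) ->
  iid_exponential lambda S ->
  (forall i w, a i w = 0 \/ a i w = 1) ->
  (\int[P]_w maxe (theta (fun i => S i) (fun i => X i) (fun i => a i) Tm w
                     - (2 * lambda * Tm + 1)%:E)%E 0%E <= 4%:E)%E.
Proof.
move=> lambda_gt0 Tm_gt0 X_ge0 S_iid a01.
have lambdaTm_ge0 : 0 <= lambda * Tm by apply: mulr_ge0; exact: ltW.
pose n0 := Num.truncn (2 * lambda * Tm + 1).
pose E k := [set w | \sum_(i < n0 + k) S i w <= Tm].
have mE k : measurable (E k).
  apply: (measurable_sum_le (f := fun i => S i)) => i.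
  exact: measurable_funP.
apply: le_trans (ge0_le_integral_nonmeasurable P
  (g := fun w => (\sum_(k <oo) (\1_(E k) w)%:E)%E) _ _) _.
- by move=> w; rewrite le_max lexx orbT.
- move=> w; apply: theta_sub_le_count => //.
  by rewrite truncn_le -mulrA addr_ge0 // mulr_ge0.
rewrite integral_nneseries //; last first.
  by move=> k; apply/measurable_EFinP/measurable_indic.
under eq_eseriesr do rewrite integral_indic // setIT.
have -> : 4%E = ((1 - 3/4)^-1)%:E :> \bar R.
  by congr EFin; rewrite (_ : 1 - 3/4 = 4^-1) ?invrK //; lra.
rewrite -nneseries_geometric; last lra.
apply: lee_nneseries => k _ //.
apply: le_trans (exponential_sum_le_tail lambda_gt0 S_iid _ _) _.
rewrite lee_fin exprD mulrA ler_piMl // /n0 -(mulrA 2 lambda Tm).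
exact: expR_half_pow_truncn_le1.
Qed.
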